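(* Let $n\ge2$. For any two polar $n$-complex numbers $u,u'$, $$|uu'|\le\sqrt n\,|u|\,|u'|,$$ where $|x_0+h_1x_1+\cdots+h_{n-1}x_{n-1}|=(x_0^2+\cdots+x_{n-1}^2)^{1/2}$. Consequently $|u^l|\le n^{(l-1)/2}|u|^l$ and $|au^l|\le n^{l/2}|a||u|^l$ for every natural number $l\ge1$ and polar $n$-complex $a,u$.
   Context: Polar $n$-complex numbers: $u=x_0+h_1x_1+\cdots+h_{n-1}x_{n-1}$, $x_j\in\mathbb{R}$, $h_0=1$, with componentwise addition and bilinear multiplication $h_jh_k=h_{(j+k)\bmod n}$. *)

(* Polar n-complex numbers over a real closed field R,
   represented by their coordinate vectors x : 'I_n -> R (x i is the
   coefficient of h_i, h_0 = 1). *)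
From HB Require Import structures.
From mathcomp Require Import all_boot all_order all_algebra.
Set Implicit Arguments. Unset Strict Implicit. Unset Printing Implicit Defensive.
Import Order.TTheory GRing.Theory Num.Theory.
Local Open Scope ring_scope.

Definition pcomplex (R : rcfType) (n : nat) := 'I_n -> R.

(* bilinear product with h_j h_k = h_{(j+k) mod n} *)
Definition pc_mul (R : rcfType) (n : nat) (u v : pcomplex R n) : pcomplex R n :=
  fun k => \sum_(i < n) \sum_(j < n | ((i + j) %% n)%N == (k : nat)) u i * v j.

Definition pc_one (R : rcfType) (n : nat) : pcomplex R n :=
  fun k => ((k : nat) == 0%N)%:R.

Fixpoint pc_pow (R : rcfType) (n : nat) (u : pcomplex R n) (l : nat) : pcomplex R n :=
  match l with
  | 0%N => @pc_one R n
  | l'.+1 => @pc_mul R n u (pc_pow u l')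
  end.

Definition pc_norm (R : rcfType) (n : nat) (u : pcomplex R n) : R :=
  Num.sqrt (\sum_(i < n) u i ^+ 2).

(* Indices are taken mod n.  The k-th coordinate of u u' is sum_i u_i u'_(k-i), and
   i |-> k - i is a permutation, so Cauchy-Schwarz bounds its square by |u|^2 |u'|^2;
   summing over the n coordinates gives |u u'|^2 <= n |u|^2 |u'|^2.  The bounds on
   powers follow by induction on l, h_0 = 1 being a right unit. *)
From mathcomp Require Import all_boot all_order all_algebra ring.
Import Order.TTheory GRing.Theory Num.Theory.
Local Open Scope ring_scope.

Lemma Lagrange_identity (R : comPzRingType) (I : finType) (a b : I -> R) :
  \sum_i \sum_j (a i * b j - a j * b i) ^+ 2 =
  2 * ((\sum_i a i ^+ 2) * (\sum_i b i ^+ 2) - (\sum_i a i * b i) ^+ 2).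
Proof.
transitivity (\sum_i \sum_j (a i ^+ 2 * b j ^+ 2) + \sum_i \sum_j (b i ^+ 2 * a j ^+ 2)
              - 2 * \sum_i \sum_j (a i * b i) * (a j * b j)).
  rewrite mulr_sumr -big_split -sumrB; apply: eq_bigr => i _ /=.
  rewrite mulr_sumr -big_split -sumrB; apply: eq_bigr => j _ /=.
  ring.
by rewrite -!big_distrlr /=; ring.
Qed.

Lemma CauchySchwarz_sum (R : realDomainType) (I : finType) (a b : I -> R) :
  (\sum_i a i * b i) ^+ 2 <= (\sum_i a i ^+ 2) * (\sum_i b i ^+ 2).
Proof.
rewrite -subr_ge0 -(pmulr_rge0 _ (ltr0Sn R 1)) -Lagrange_identity.
by do 2!apply: sumr_ge0 => ? _; exact: sqr_ge0.
Qed.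

Lemma sqr_sum_subsingleton (R : pzSemiRingType) (I : finType) (P : pred I) (F : I -> R) :
  {in P &, forall i j, i = j} -> (\sum_(i | P i) F i) ^+ 2 = \sum_(i | P i) F i ^+ 2.
Proof.
move=> P_subsingleton; have [i0 Pi0 | P0] := pickP P; last first.
  by rewrite !big_pred0 // expr0n.
have P1 : P =1 pred1 i0 by move=> i; apply/idP/eqP => [Pi | ->]; first exact: P_subsingleton.
by rewrite !(big_pred1 i0 P1).
Qed.

Lemma addn_modn_ord_inj n (i : 'I_n) : injective (fun j : 'I_n => (i + j) %% n)%N.
Proof.
move=> j j' /eqP eq_ij; apply: val_inj.
by move: eq_ij; rewrite eqn_modDl !modn_small // => /eqP.
Qed.

Lemma sum_fibres_addn_modn (R : nmodType) n (i : 'I_n) (F : 'I_n -> R) :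
  \sum_(k < n) \sum_(j < n | ((i + j) %% n)%N == k) F j = \sum_j F j.
Proof.
have n_gt0 : (0 < n)%N by apply: leq_ltn_trans (ltn_ord i).
rewrite (exchange_big_dep xpredT) //=; apply: eq_bigr => j _.
by rewrite (big_pred1 (Ordinal (ltn_pmod (i + j) n_gt0))) // => k; rewrite eq_sym.
Qed.

Section PolarComplex.

Variables (R : rcfType) (n : nat).
Implicit Types u v : pcomplex R n.

Definition pc_sqnorm u := \sum_i u i ^+ 2.

Lemma pc_normE u : pc_norm u = Num.sqrt (pc_sqnorm u).
Proof. by []. Qed.

Lemma pc_sqnorm_ge0 u : 0 <= pc_sqnorm u.
Proof. by apply: sumr_ge0 => i _; exact: sqr_ge0. Qed.

Lemma pc_norm_ge0 u : 0 <= pc_norm u.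
Proof. exact: sqrtr_ge0. Qed.

Lemma pc_sqnorm_mul_le u v : pc_sqnorm (pc_mul u v) <= n%:R * pc_sqnorm u * pc_sqnorm v.
Proof.
(* [w k i] is u'_(k-i), written as a sum over a one-point fibre to avoid subtraction. *)
pose w (k i : 'I_n) := \sum_(j < n | ((i + j) %% n)%N == k) v j.
have pc_mulE k : pc_mul u v k = \sum_i u i * w k i.
  by apply: eq_bigr => i _; rewrite mulr_sumr.
have sqnorm_w i : \sum_k w k i ^+ 2 = pc_sqnorm v.
  rewrite /pc_sqnorm -(@sum_fibres_addn_modn _ _ i (fun j => v j ^+ 2)); apply: eq_bigr => k _.
  apply: sqr_sum_subsingleton => j j' /eqP ij_k /eqP ij'_k.
  by apply: (@addn_modn_ord_inj _ i); rewrite /= ij_k ij'_k.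
apply: le_trans (_ : \sum_k pc_sqnorm u * \sum_i w k i ^+ 2 <= _).
  by apply: ler_sum => k _; rewrite pc_mulE; exact: CauchySchwarz_sum.
rewrite -mulr_sumr exchange_big (eq_bigr _ (fun i _ => sqnorm_w i)) sumr_const card_ord.
by rewrite mulrnAr -mulr_natl mulrA.
Qed.

Lemma pc_norm_mul_le u v :
  pc_norm (pc_mul u v) <= Num.sqrt n%:R * pc_norm u * pc_norm v.
Proof.
rewrite !pc_normE -!sqrtrM ?mulr_ge0 ?ler0n ?pc_sqnorm_ge0 //.
by rewrite ler_wsqrtr // pc_sqnorm_mul_le.
Qed.

Hypothesis n_gt0 : (0 < n)%N.

Lemma pc_mulr1 u k : pc_mul u (@pc_one R n) k = u k.
Proof.
pose j0 : 'I_n := Ordinal n_gt0.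
rewrite /pc_mul (exchange_big_dep xpredT) //= (bigD1 j0) //= [X in _ + X]big1 => [|j nz_j].
  rewrite addr0 (big_pred1 k) => [|i /=]; first by rewrite /pc_one eqxx mulr1.
  by rewrite addn0 modn_small.
have nz_j' : ((j : nat) == 0%N) = false by apply: negbTE.
by apply: big1 => i _; rewrite /pc_one nz_j' mulr0.
Qed.

Lemma pc_norm_pow1 u : pc_norm (pc_pow u 1) = pc_norm u.
Proof. by rewrite /pc_norm /=; congr Num.sqrt; apply: eq_bigr => k _; rewrite pc_mulr1. Qed.

Lemma pc_norm_pow_le u l :
  pc_norm (pc_pow u l.+1) <= Num.sqrt n%:R ^+ l * pc_norm u ^+ l.+1.
Proof.
elim: l => [|l IHl]; first by rewrite pc_norm_pow1 mul1r.
apply: le_trans (pc_norm_mul_le _ _) _.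
rewrite exprS [pc_norm u ^+ _]exprS mulrACA.
by rewrite ler_wpM2l // mulr_ge0 ?sqrtr_ge0 ?pc_norm_ge0.
Qed.

Lemma pc_norm_mul_pow_le a u l :
  pc_norm (pc_mul a (pc_pow u l.+1)) <= Num.sqrt n%:R ^+ l.+1 * pc_norm a * pc_norm u ^+ l.+1.
Proof.
apply: le_trans (pc_norm_mul_le _ _) _.
rewrite exprS [_ * _ ^+ l * _]mulrAC -[X in _ <= X]mulrA.
by rewrite ler_wpM2l ?pc_norm_pow_le // mulr_ge0 ?sqrtr_ge0 ?pc_norm_ge0.
Qed.

End PolarComplex.

Theorem mainTheorem8 (R : rcfType) (n : nat) (hn : (2 <= n)%N) :
  (forall u u' : pcomplex R n,
      pc_norm (pc_mul u u') <= Num.sqrt (n%:R) * pc_norm u * pc_norm u') /\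
  (forall (u : pcomplex R n) (l : nat), (1 <= l)%N ->
      pc_norm (pc_pow u l) <= Num.sqrt (n%:R) ^+ (l - 1) * pc_norm u ^+ l) /\
  (forall (a u : pcomplex R n) (l : nat), (1 <= l)%N ->
      pc_norm (pc_mul a (pc_pow u l))
        <= Num.sqrt (n%:R) ^+ l * pc_norm a * pc_norm u ^+ l).
Proof.
have n_gt0 : (0 < n)%N := ltnW hn.
split; first exact: pc_norm_mul_le.
split=> [u | a u] [|l] // _; first rewrite subn1.
- exact: pc_norm_pow_le.
- exact: pc_norm_mul_pow_le.
Qed.
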